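(* If a propositional logic $\mathbf{L}$ is decidable, then it has an effective sequential approximation.
   Context: A propositional language $\mathcal{L}$ has variables $X_1,X_2,\ldots$ and finitely many connectives with arities; $\mathrm{Frm}(\mathcal{L})$ is the set of formulas. A propositional logic is a set $\mathbf{L}\subseteq\mathrm{Frm}(\mathcal{L})$ closed under substitution of formulas for variables. A finite-valued logic $\mathbf{M}$ is given by a finite set $V(\mathbf{M})$ of truth values, designated values $V^+(\mathbf{M})\subseteq V(\mathbf{M})$, and a truth function for each connective; valuations map variables to truth values and extend to formulas; a tautology is a formula designated under every valuation; $\mathrm{Taut}(\mathbf{M})$ is the set of tautologies; $\mathbf{M}_1\unlhd\mathbf{M}_2$ means $\mathrm{Taut}(\mathbf{M}_1)\subseteq\mathrm{Taut}(\mathbf{M}_2)$. A sequential approximation of $\mathbf{L}$ is a sequence $\langle\mathbf{M}_1,\mathbf{M}_2,\ldots\rangle$ of finite-valued logics over $\mathcal{L}$ such that $\mathbf{M}_i\unlhd\mathbf{M}_j$ whenever $i\ge j$, and $\mathbf{L}=\bigcap_j\mathrm{Taut}(\mathbf{M}_j)$. It is effective if the sequence is effectively enumerated (there is an algorithm producing, given $i$, the finite description of $\mathbf{M}_i$). *)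

From Stdlib Require Import Arith List.
Import ListNotations.

(* A language: finitely many connectives, numbered 0 .. nconn-1, with arities. *)
Record lang := Lang { nconn : nat; arity : nat -> nat }.

Inductive term : Type :=
| Var : nat -> term
| App : nat -> list term -> term.

(* Well-formed formulas of the language L: connectives exist and are applied
   to the right number of arguments.  Frm(L) = { t | wf L t }. *)
Fixpoint wf (L : lang) (t : term) : Prop :=
  match t with
  | Var _ => True
  | App c args =>
      c < nconn L /\ length args = arity L c /\
      (fix wfl (l : list term) : Prop :=
         match l with
         | [] => True
         | a :: l' => wf L a /\ wfl l'
         end) args
  end.

Fixpoint subst (sigma : nat -> term) (t : term) : term :=
  match t with
  | Var n => sigma n
  | App c args => App c (map (subst sigma) args)
  end.

Definition is_logic (L : lang) (Lg : term -> Prop) : Prop :=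
  (forall t, Lg t -> wf L t) /\
  (forall (sigma : nat -> term) (t : term),
      (forall n, wf L (sigma n)) -> Lg t -> Lg (subst sigma t)).

(* Truth values are 0 .. nv-1; designated values are those v < nv with
   desig v = true; op c is the truth function of connective c. *)
Record fmatrix := FMatrix {
  nv : nat;
  desig : nat -> bool;
  op : nat -> list nat -> nat }.

Definition is_fmatrix (L : lang) (M : fmatrix) : Prop :=
  0 < nv M /\
  forall c vs, c < nconn L -> length vs = arity L c ->
    Forall (fun v => v < nv M) vs -> op M c vs < nv M.

Fixpoint evalM (M : fmatrix) (val : nat -> nat) (t : term) : nat :=
  match t with
  | Var n => val n
  | App c args => op M c (map (evalM M val) args)
  end.

Definition Taut (L : lang) (M : fmatrix) (t : term) : Prop :=
  wf L t /\
  forall val : nat -> nat, (forall n, val n < nv M) ->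
    desig M (evalM M val t) = true.

Definition seq_approx (L : lang) (Lg : term -> Prop) (Ms : nat -> fmatrix)
  : Prop :=
  (forall i, is_fmatrix L (Ms i)) /\
  (forall i j, j <= i -> forall t, Taut L (Ms i) t -> Taut L (Ms j) t) /\
  (forall t, wf L t -> (Lg t <-> forall j, Taut L (Ms j) t)).

Inductive rf : Type :=
| rZero : rf
| rSucc : rf
| rProj : nat -> rf
| rComp : rf -> list rf -> rf
| rPrim : rf -> rf -> rf
| rMu   : rf -> rf.

Inductive reval : rf -> list nat -> nat -> Prop :=
| ev_zero : forall xs, reval rZero xs 0
| ev_succ : forall x xs, reval rSucc (x :: xs) (S x)
| ev_proj : forall i xs, i < length xs -> reval (rProj i) xs (nth i xs 0)
| ev_comp : forall f gs xs ys y,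
    Forall2 (fun g y0 => reval g xs y0) gs ys ->
    reval f ys y -> reval (rComp f gs) xs y
| ev_prim0 : forall f g xs y, reval f xs y -> reval (rPrim f g) (0 :: xs) y
| ev_primS : forall f g n xs y z,
    reval (rPrim f g) (n :: xs) y -> reval g (n :: y :: xs) z ->
    reval (rPrim f g) (S n :: xs) z
| ev_mu : forall f xs n,
    reval f (n :: xs) 0 ->
    (forall m, m < n -> exists k, reval f (m :: xs) (S k)) ->
    reval (rMu f) xs n.

Definition cpair (x y : nat) : nat := (x + y) * (x + y + 1) / 2 + y.

Fixpoint code (t : term) : nat :=
  match t with
  | Var n => cpair 0 n
  | App c args =>
      cpair (S c)
        ((fix codel (l : list term) : nat :=
            match l with
            | [] => 0
            | a :: l' => S (cpair (code a) (codel l'))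
            end) args)
  end.

Definition decidable_logic (L : lang) (Lg : term -> Prop) : Prop :=
  exists r : rf, forall t, wf L t ->
    (exists y, reval r [code t] y) /\ (reval r [code t] 0 <-> Lg t).

Definition effective_seq (L : lang) (Ms : nat -> fmatrix) : Prop :=
  exists rN rD rO : rf, forall i,
    reval rN [i] (nv (Ms i)) /\
    (forall v, v < nv (Ms i) ->
       reval rD [i; v] (if desig (Ms i) v then 1 else 0)) /\
    (forall c vs, c < nconn L -> length vs = arity L c ->
       Forall (fun v => v < nv (Ms i)) vs ->
       reval rO (i :: c :: vs) (op (Ms i) c vs)).

(* The i-th matrix is the Lindenbaum matrix of Lg cut off at i: its values are
   the codes <= i of formulas, designated when the decoded formula lies in Lg,
   plus one extra designated value S i absorbing every formula whose code
   exceeds i.  Under any valuation a formula evaluates either to S i or to the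
   code of one of its substitution instances, so every member of Lg is a
   tautology; a formula t outside Lg is refuted in the matrix with index
   [code t] by sending each variable to its own code.  A valuation into a
   smaller matrix lifts to a larger one by renaming the absorbing value, which
   gives the required inclusion of tautologies.  The matrices are effective
   because recognising codes of formulas is primitive recursive, so the
   designation table only calls the decider of Lg on codes of formulas. *)

From Stdlib Require Import Arith List Lia Bool Setoid Cantor ClassicalEpsilon.
Import ListNotations.

Arguments cpair : simpl never.

(** * Cantor pairing *)

Fixpoint tri (n : nat) : nat :=
  match n with 0 => 0 | S k => tri k + S k end.

Lemma double_tri n : 2 * tri n = n * S n.
Proof. induction n as [|n IH]; cbn [tri]; lia. Qed.

Lemma cpair_tri x y : cpair x y = tri (x + y) + y.
Proof.
  unfold cpair. rewrite Nat.add_1_r, <- double_tri, Nat.mul_comm, Nat.div_mul by lia.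
  reflexivity.
Qed.

Lemma cpair_to_nat x y : cpair x y = Cantor.to_nat (x, y).
Proof.
  rewrite Cantor.to_nat_spec2, <- double_tri, Nat.mul_comm, Nat.div_mul by lia.
  rewrite cpair_tri, (Nat.add_comm y x). lia.
Qed.

Lemma cpair_inj x y x' y' : cpair x y = cpair x' y' -> x = x' /\ y = y'.
Proof.
  rewrite !cpair_to_nat. intros H. apply Cantor.to_nat_inj in H. now injection H.
Qed.

Lemma cpair_ge x y : x + y <= cpair x y.
Proof. rewrite cpair_to_nat, Nat.add_comm. apply Cantor.to_nat_non_decreasing. Qed.

(* Unpairing through the triangular root [troot z], the largest [s] with
   [tri s <= z], is primitive recursive with a single accumulator, unlike
   [Cantor.of_nat], which iterates on pairs. *)
Fixpoint troot (z : nat) : nat :=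
  match z with
  | 0 => 0
  | S z' => if tri (S (troot z')) <=? S z' then S (troot z') else troot z'
  end.

Lemma troot_spec z : tri (troot z) <= z < tri (S (troot z)).
Proof.
  induction z as [|z IH]; cbn; [lia|].
  destruct (Nat.leb_spec (tri (troot z) + S (troot z)) (S z)); cbn in *; lia.
Qed.

Definition unpair2 (z : nat) : nat := z - tri (troot z).
Definition unpair1 (z : nat) : nat := troot z - unpair2 z.

Lemma cpair_unpair z : cpair (unpair1 z) (unpair2 z) = z.
Proof.
  pose proof (troot_spec z) as H. cbn [tri] in H. unfold unpair1, unpair2.
  rewrite cpair_tri. replace (troot z - (z - tri (troot z)) + (z - tri (troot z)))
    with (troot z) by lia. lia.
Qed.

Lemma unpair1_cpair x y : unpair1 (cpair x y) = x.
Proof. exact (proj1 (cpair_inj _ _ _ _ (cpair_unpair (cpair x y)))). Qed.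

Lemma unpair2_cpair x y : unpair2 (cpair x y) = y.
Proof. exact (proj2 (cpair_inj _ _ _ _ (cpair_unpair (cpair x y)))). Qed.

Lemma unpair_le z : unpair1 z + unpair2 z <= z.
Proof. rewrite <- (cpair_unpair z) at 3. apply cpair_ge. Qed.

(** * Primitive recursive expressions *)

(* [ERec b s n x y] is primitive recursion on the value of [n] with the two
   parameters [x] and [y]: the base case [b] is evaluated in the environment
   [[x; y]], the step [s] in [[k; acc; x; y]]. *)
Inductive pexp : Type :=
| EVar : nat -> pexp
| EZero : pexp
| ESucc : pexp -> pexp
| ERec : pexp -> pexp -> pexp -> pexp -> pexp -> pexp.

Fixpoint eval (e : pexp) (xs : list nat) : nat :=
  match e with
  | EVar i => nth i xs 0
  | EZero => 0
  | ESucc e => S (eval e xs)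
  | ERec b s n x y =>
      nat_rect (fun _ => nat) (eval b [eval x xs; eval y xs])
        (fun k acc => eval s [k; acc; eval x xs; eval y xs]) (eval n xs)
  end.

(* [eval] reads missing variables as [0] whereas [rProj] has no value on them,
   hence the side condition [scoped] for compilation. *)
Fixpoint scoped (e : pexp) (m : nat) : Prop :=
  match e with
  | EVar i => i < m
  | EZero => True
  | ESucc e => scoped e m
  | ERec b s n x y => scoped b 2 /\ scoped s 4 /\ scoped n m /\ scoped x m /\ scoped y m
  end.

Fixpoint compile (e : pexp) : rf :=
  match e with
  | EVar i => rProj i
  | EZero => rZero
  | ESucc e => rComp rSucc [compile e]
  | ERec b s n x y => rComp (rPrim (compile b) (compile s)) [compile n; compile x; compile y]
  end.

Lemma scoped_rec b s n x y m :
  scoped b 2 -> scoped s 4 -> scoped n m -> scoped x m -> scoped y m -> scoped (ERec b s n x y) m.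
Proof. cbn. tauto. Qed.

Lemma compile_correct e xs : scoped e (length xs) -> reval (compile e) xs (eval e xs).
Proof.
  revert xs. induction e as [i| |e IH|b IHb s IHs n IHn x IHx y IHy]; intros xs Hs; cbn in *.
  - now apply ev_proj.
  - apply ev_zero.
  - eapply ev_comp; [now repeat constructor; apply IH|apply ev_succ].
  - destruct Hs as (Hb & Hs & Hn & Hx & Hy).
    eapply ev_comp; [repeat constructor; auto|].
    induction (eval n xs) as [|k IHk]; cbn.
    + apply ev_prim0. now apply IHb.
    + eapply ev_primS; [exact IHk|]. now apply IHs.
Qed.

Lemma compile_computes e xs y :
  scoped e (length xs) -> eval e xs = y -> reval (compile e) xs y.
Proof. intros Hs <-. now apply compile_correct. Qed.

Definition e_ifz (c z s : pexp) : pexp := ERec (EVar 0) (EVar 3) c z s.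
Definition e_add (a b : pexp) : pexp := ERec (EVar 0) (ESucc (EVar 1)) a b EZero.
Definition e_pred (a : pexp) : pexp := ERec EZero (EVar 0) a EZero EZero.
Definition e_sub (a b : pexp) : pexp := ERec (EVar 0) (e_pred (EVar 1)) b a EZero.
Definition e_isz (a : pexp) : pexp := ERec (ESucc EZero) EZero a EZero EZero.
Definition e_leb (a b : pexp) : pexp := e_isz (e_sub a b).
Definition e_eqb (a b : pexp) : pexp := e_isz (e_add (e_sub a b) (e_sub b a)).
Fixpoint e_const (k : nat) : pexp :=
  match k with 0 => EZero | S k => ESucc (e_const k) end.
Definition e_tri (a : pexp) : pexp := ERec EZero (e_add (EVar 1) (ESucc (EVar 0))) a EZero EZero.
Definition e_troot (a : pexp) : pexp :=
  ERec EZero (e_ifz (e_leb (e_tri (ESucc (EVar 1))) (ESucc (EVar 0))) (EVar 1) (ESucc (EVar 1)))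
    a EZero EZero.
Definition e_unpair2 (a : pexp) : pexp := e_sub a (e_tri (e_troot a)).
Definition e_unpair1 (a : pexp) : pexp := e_sub (e_troot a) (e_unpair2 a).
Definition e_cpair (a b : pexp) : pexp := e_add (e_tri (e_add a b)) b.

Create HintDb scoped.
(* [scoped] computes on the constructors, so [Hint Resolve] cannot index them. *)
Hint Extern 1 (scoped (EVar _) _) => cbn; lia : scoped.
Hint Extern 1 (scoped EZero _) => exact I : scoped.
Hint Extern 1 (scoped (ESucc _) _) => cbn [scoped] : scoped.
Hint Extern 1 (_ < _) => cbn; lia : scoped.

Ltac prove_scoped := intros; cbn; intuition (auto with scoped).

Lemma scoped_const k m : scoped (e_const k) m.
Proof. induction k; cbn; auto. Qed.
Lemma scoped_ifz c z s m : scoped c m -> scoped z m -> scoped s m -> scoped (e_ifz c z s) m.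
Proof. prove_scoped. Qed.
Hint Resolve scoped_const scoped_ifz : scoped.
Lemma scoped_add a b m : scoped a m -> scoped b m -> scoped (e_add a b) m.
Proof. prove_scoped. Qed.
Lemma scoped_pred a m : scoped a m -> scoped (e_pred a) m.
Proof. prove_scoped. Qed.
Lemma scoped_sub a b m : scoped a m -> scoped b m -> scoped (e_sub a b) m.
Proof. prove_scoped. Qed.
Hint Resolve scoped_add scoped_pred scoped_sub : scoped.
Lemma scoped_leb a b m : scoped a m -> scoped b m -> scoped (e_leb a b) m.
Proof. prove_scoped. Qed.
Lemma scoped_eqb a b m : scoped a m -> scoped b m -> scoped (e_eqb a b) m.
Proof. prove_scoped. Qed.
Lemma scoped_tri a m : scoped a m -> scoped (e_tri a) m.
Proof. prove_scoped. Qed.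
Hint Resolve scoped_leb scoped_eqb scoped_tri : scoped.
Lemma scoped_unpair1 a m : scoped a m -> scoped (e_unpair1 a) m.
Proof. prove_scoped. Qed.
Lemma scoped_unpair2 a m : scoped a m -> scoped (e_unpair2 a) m.
Proof. prove_scoped. Qed.
Lemma scoped_cpair a b m : scoped a m -> scoped b m -> scoped (e_cpair a b) m.
Proof. prove_scoped. Qed.
Hint Resolve scoped_unpair1 scoped_unpair2 scoped_cpair : scoped.

Lemma eval_ifz c z s xs :
  eval (e_ifz c z s) xs = match eval c xs with 0 => eval z xs | S _ => eval s xs end.
Proof. cbn. now destruct (eval c xs). Qed.

Lemma eval_add a b xs : eval (e_add a b) xs = eval a xs + eval b xs.
Proof. cbn. induction (eval a xs); cbn; lia. Qed.

Lemma eval_pred a xs : eval (e_pred a) xs = pred (eval a xs).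
Proof. cbn. now destruct (eval a xs). Qed.

Lemma eval_sub a b xs : eval (e_sub a b) xs = eval a xs - eval b xs.
Proof.
  unfold e_sub; cbn [eval nth]. induction (eval b xs) as [|k IH]; cbn [nat_rect]; [lia|].
  rewrite eval_pred. cbn [eval nth]. rewrite IH. lia.
Qed.

Lemma eval_isz a xs : eval (e_isz a) xs = Nat.b2n (eval a xs =? 0).
Proof. cbn. now destruct (eval a xs). Qed.

Lemma eval_leb a b xs : eval (e_leb a b) xs = Nat.b2n (eval a xs <=? eval b xs).
Proof.
  unfold e_leb. rewrite eval_isz, eval_sub.
  destruct (Nat.leb_spec (eval a xs) (eval b xs)), (Nat.eqb_spec (eval a xs - eval b xs) 0);
    cbn; lia.
Qed.

Lemma eval_eqb a b xs : eval (e_eqb a b) xs = Nat.b2n (eval a xs =? eval b xs).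
Proof.
  unfold e_eqb. rewrite eval_isz, eval_add, !eval_sub.
  destruct (Nat.eqb_spec (eval a xs) (eval b xs)),
    (Nat.eqb_spec (eval a xs - eval b xs + (eval b xs - eval a xs)) 0); cbn; lia.
Qed.

Lemma eval_const k xs : eval (e_const k) xs = k.
Proof. induction k; cbn; auto. Qed.

Lemma eval_tri a xs : eval (e_tri a) xs = tri (eval a xs).
Proof.
  unfold e_tri; cbn [eval nth].
  induction (eval a xs) as [|k IH]; cbn [nat_rect tri]; [reflexivity|].
  rewrite eval_add. cbn [eval nth]. rewrite IH. lia.
Qed.

Lemma eval_troot a xs : eval (e_troot a) xs = troot (eval a xs).
Proof.
  unfold e_troot; cbn [eval nth].
  induction (eval a xs) as [|k IH]; cbn [nat_rect troot]; [reflexivity|].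
  rewrite eval_ifz, eval_leb, eval_tri. cbn [eval nth]. rewrite IH.
  now destruct (tri (S (troot k)) <=? S k).
Qed.

Lemma eval_unpair2 a xs : eval (e_unpair2 a) xs = unpair2 (eval a xs).
Proof. unfold e_unpair2. now rewrite eval_sub, eval_tri, eval_troot. Qed.

Lemma eval_unpair1 a xs : eval (e_unpair1 a) xs = unpair1 (eval a xs).
Proof. unfold e_unpair1. now rewrite eval_sub, eval_troot, eval_unpair2. Qed.

Lemma eval_cpair a b xs : eval (e_cpair a b) xs = cpair (eval a xs) (eval b xs).
Proof. unfold e_cpair. now rewrite eval_add, eval_tri, eval_add, cpair_tri. Qed.

Lemma eval_succ a xs : eval (ESucc a) xs = S (eval a xs).
Proof. reflexivity. Qed.

Lemma eval_zero xs : eval EZero xs = 0.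
Proof. reflexivity. Qed.

Lemma eval_var i xs : eval (EVar i) xs = nth i xs 0.
Proof. reflexivity. Qed.

Hint Rewrite eval_ifz eval_add eval_pred eval_sub eval_isz eval_leb eval_eqb eval_const
  eval_tri eval_troot eval_unpair1 eval_unpair2 eval_cpair eval_zero eval_succ eval_var : peval.

Lemma eval_iter n x f g xs :
  (forall k acc y, eval f [k; acc; y; 0] = g acc) ->
  eval (ERec (EVar 0) f n x EZero) xs = Nat.iter (eval n xs) g (eval x xs).
Proof.
  intros Hf. unfold Nat.iter. cbn [eval nth].
  induction (eval n xs) as [|k IH]; cbn [nat_rect]; [reflexivity|].
  now rewrite Hf, IH.
Qed.

(** * A conditional for mu-recursive functions *)

Definition r_drop (B : rf) : rf := rPrim B (rProj 1).

Lemma r_drop_correct B xs y x : reval B xs y -> reval (r_drop B) (x :: xs) y.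
Proof.
  intros HB. induction x as [|x IH]; [now apply ev_prim0|].
  eapply ev_primS; [exact IH|]. apply (ev_proj 1 (x :: y :: xs)). cbn; lia.
Qed.

Definition e_neqb (a b : pexp) : pexp := e_isz (e_eqb a b).

Lemma eval_neqb a b xs : eval (e_neqb a b) xs = if eval a xs =? eval b xs then 0 else 1.
Proof. unfold e_neqb. rewrite eval_isz, eval_eqb. now destruct (eval a xs =? eval b xs). Qed.

Definition guard_search (A B : rf) : rf :=
  rPrim A (rComp (compile (e_neqb (EVar 0) (EVar 1))) [rProj 0; r_drop (r_drop B)]).

Lemma guard_search_correct A B xs a b m :
  reval A xs a -> reval B xs b ->
  reval (guard_search A B) (m :: xs) (match m with 0 => a | S k => if k =? b then 0 else 1 end).
Proof.
  intros HA HB. induction m as [|m IH]; [now apply ev_prim0|].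
  eapply ev_primS; [exact IH|].
  apply ev_comp with (ys := [m; b]).
  - constructor; [apply (ev_proj 0 (m :: _ :: xs)); cbn; lia|].
    constructor; [now do 2 apply r_drop_correct|constructor].
  - apply compile_computes; [cbn; lia|]. now rewrite eval_neqb.
Qed.

(* Minimisation lets [r_guard A B] run [B] only once [A] has returned a
   positive value. *)
Definition r_guard (A B : rf) : rf := rMu (guard_search A B).

Lemma r_guard_zero A B xs : reval A xs 0 -> reval (r_guard A B) xs 0.
Proof. intros HA. apply ev_mu; [now apply ev_prim0|lia]. Qed.

Lemma r_guard_pos A B xs a b :
  reval A xs (S a) -> reval B xs b -> reval (r_guard A B) xs (S b).
Proof.
  intros HA HB. apply ev_mu.
  - pose proof (guard_search_correct A B xs (S a) b (S b) HA HB) as H.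
    cbn iota in H. now rewrite Nat.eqb_refl in H.
  - intros m Hm. pose proof (guard_search_correct A B xs (S a) b m HA HB) as H.
    destruct m as [|m]; [eauto|].
    destruct (Nat.eqb_spec m b); [lia|eauto].
Qed.

Definition r_is_zero (A : rf) : rf := rComp (compile (e_isz (EVar 0))) [A].

(* Unlike [rComp], the conditional [r_if] runs only the branch selected by [A],
   so the other branch may diverge. *)
Definition r_if (A B C : rf) : rf :=
  rComp (compile (e_pred (e_add (EVar 0) (EVar 1)))) [r_guard A B; r_guard (r_is_zero A) C].

Lemma r_if_join u v w :
  pred (u + v) = w -> reval (compile (e_pred (e_add (EVar 0) (EVar 1)))) [u; v] w.
Proof. intros <-. apply compile_computes; [cbn; lia|]. now rewrite eval_pred, eval_add. Qed.

Lemma r_is_zero_correct A xs a : reval A xs a -> reval (r_is_zero A) xs (Nat.b2n (a =? 0)).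
Proof.
  intros HA. apply ev_comp with (ys := [a]); [now constructor|].
  apply compile_computes; [cbn; lia|]. now rewrite eval_isz.
Qed.

Lemma r_if_true A B C xs a b : reval A xs (S a) -> reval B xs b -> reval (r_if A B C) xs b.
Proof.
  intros HA HB. apply ev_comp with (ys := [S b; 0]); [|apply r_if_join; lia].
  constructor; [eapply r_guard_pos; eauto|].
  constructor; [|constructor]. apply r_guard_zero. exact (r_is_zero_correct A xs (S a) HA).
Qed.

Lemma r_if_false A B C xs c : reval A xs 0 -> reval C xs c -> reval (r_if A B C) xs c.
Proof.
  intros HA HC. apply ev_comp with (ys := [0; S c]); [|apply r_if_join; lia].
  constructor; [now apply r_guard_zero|].
  constructor; [|constructor]. eapply r_guard_pos; [exact (r_is_zero_correct A xs 0 HA)|exact HC].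
Qed.

(** * Codes of formulas *)

Section TermInd.
Variable P : term -> Prop.
Hypothesis HVar : forall n, P (Var n).
Hypothesis HApp : forall c args, Forall P args -> P (App c args).

Fixpoint term_nested_ind (t : term) : P t :=
  match t with
  | Var n => HVar n
  | App c args =>
      HApp c args
        ((fix go (l : list term) : Forall P l :=
            match l with
            | [] => Forall_nil _
            | a :: l' => Forall_cons _ (term_nested_ind a) (go l')
            end) args)
  end.
End TermInd.

Fixpoint list_code (vs : list nat) : nat :=
  match vs with [] => 0 | v :: vs' => S (cpair v (list_code vs')) end.

Lemma code_App c args : code (App c args) = cpair (S c) (list_code (map code args)).
Proof.
  cbn [code]. f_equal. induction args as [|a args IH]; [reflexivity|].
  cbn [map list_code]. now rewrite <- IH.
Qed.

Lemma wf_App L c args :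
  wf L (App c args) <-> c < nconn L /\ length args = arity L c /\ Forall (wf L) args.
Proof.
  cbn [wf]. enough (Hargs : forall l, (fix wfl (l : list term) : Prop :=
    match l with [] => True | a :: l' => wf L a /\ wfl l' end) l <-> Forall (wf L) l)
    by now rewrite Hargs.
  induction l; [split; auto|]. rewrite Forall_cons_iff. tauto.
Qed.

Lemma list_code_inj vs ws : list_code vs = list_code ws -> vs = ws.
Proof.
  revert ws. induction vs as [|v vs IH]; intros [|w ws] H; cbn in H; try discriminate; [easy|].
  injection H as H. apply cpair_inj in H as [-> H]. now rewrite (IH ws H).
Qed.

Lemma list_code_gt v vs : In v vs -> v < list_code vs.
Proof.
  induction vs as [|w vs IH]; [easy|]. intros [->|Hin]; cbn [list_code].
  - pose proof (cpair_ge v (list_code vs)). lia.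
  - pose proof (cpair_ge w (list_code vs)). specialize (IH Hin). lia.
Qed.

Lemma code_inj t u : code t = code u -> t = u.
Proof.
  revert u. induction t as [n|c args IH] using term_nested_ind; intros [m|d brgs] H;
    rewrite ?code_App in H; cbn [code] in H; apply cpair_inj in H as [Hc Hl];
    try discriminate; [now subst|].
  injection Hc as ->. apply list_code_inj in Hl. f_equal. revert brgs Hl.
  induction IH as [|a args Ha _ IHargs]; intros [|b brgs] Hl; try discriminate; [easy|].
  injection Hl as Hab Hl. now rewrite (Ha b Hab), (IHargs brgs Hl).
Qed.

Lemma code_arg_lt a c args : In a args -> code a < code (App c args).
Proof.
  intros Hin. rewrite code_App. pose proof (cpair_ge (S c) (list_code (map code args))).
  pose proof (list_code_gt (code a) (map code args) (in_map code args a Hin)). lia.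
Qed.

(** * Recognising codes of formulas *)

Section Recognition.
Variable L : lang.

Definition codes_formula (v : nat) : Prop := exists t, wf L t /\ code t = v.

Definition codes_formulas (k w : nat) : Prop :=
  exists l, Forall (wf L) l /\ length l = k /\ list_code (map code l) = w.

Lemma codes_formulas_0 k : codes_formulas k 0 <-> k = 0.
Proof.
  split.
  - intros [[|t l] (_ & Hk & Hw)]; [easy|discriminate].
  - intros ->. now exists [].
Qed.

Lemma codes_formulas_S k y :
  codes_formulas k (S y) <->
  exists k', k = S k' /\ codes_formula (unpair1 y) /\ codes_formulas k' (unpair2 y).
Proof.
  rewrite <- (cpair_unpair y) at 1. split.
  - intros [[|t l] (Hwf & Hk & Hw)]; [discriminate|].
    cbn in Hk, Hw. injection Hw as Hw. apply cpair_inj in Hw as [Ht Hl].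
    inversion Hwf; subst. exists (length l). split; [reflexivity|].
    split; [now exists t|now exists l].
  - intros (k' & -> & [t [Ht Hc]] & [l (Hl & Hk & Hw)]).
    exists (t :: l). repeat split; [now constructor|cbn; congruence|cbn; congruence].
Qed.

Lemma codes_formula_unpair h :
  codes_formula h <->
  match unpair1 h with
  | 0 => True
  | S c => c < nconn L /\ codes_formulas (arity L c) (unpair2 h)
  end.
Proof.
  rewrite <- (cpair_unpair h) at 1.
  destruct (unpair1 h) as [|c]; split; try easy.
  - intros _. now exists (Var (unpair2 h)).
  - intros [[n|d args] [Hwf Hc]]; rewrite ?code_App in Hc; cbn [code] in Hc;
      apply cpair_inj in Hc as [Hc Hargs]; [discriminate|].
    injection Hc as ->. apply wf_App in Hwf as (Hd & Hk & Hargs_wf).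
    split; [exact Hd|]. now exists args.
  - intros [Hc [args (Hwf & Hk & Hargs)]]. exists (App c args).
    rewrite wf_App, code_App, Hargs. auto.
Qed.

Fixpoint arity_below (n c : nat) : nat :=
  match n with 0 => 0 | S k => if c =? k then arity L k else arity_below k c end.

Lemma arity_below_spec n c : c < n -> arity_below n c = arity L c.
Proof.
  induction n as [|n IH]; intros Hc; [lia|]. cbn.
  destruct (Nat.eqb_spec c n); [now subst|]. apply IH. lia.
Qed.

(* The recogniser is a worklist machine.  A task [cpair k w] asks that [w]
   code a list of [k] formulas; a state is [0] (reject) or [S (list_code ts)]
   with pending tasks [ts], so that [1] means accept.  Each step replaces the
   first task by tasks of smaller total weight. *)
Definition task_ok (t : nat) : Prop := codes_formulas (unpair1 t) (unpair2 t).

Definition task_weight (t : nat) : nat := S (unpair2 t).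

Fixpoint tasks_weight (ts : list nat) : nat :=
  match ts with [] => 0 | t :: ts' => task_weight t + tasks_weight ts' end.

Lemma tasks_weight_app ts ts' : tasks_weight (ts ++ ts') = tasks_weight ts + tasks_weight ts'.
Proof. induction ts as [|t ts IH]; cbn [app tasks_weight]; lia. Qed.

Definition step_task (k w rest : nat) : nat :=
  match w with
  | 0 => match k with 0 => S rest | S _ => 0 end
  | S y =>
      match k with
      | 0 => 0
      | S k' =>
          let rest' := S (cpair (cpair k' (unpair2 y)) rest) in
          match unpair1 (unpair1 y) with
          | 0 => S rest'
          | S c =>
              if c <? nconn L
              then S (S (cpair (cpair (arity_below (nconn L) c) (unpair2 (unpair1 y))) rest'))
              else 0
          end
      end
  end.

Definition step (s : nat) : nat :=
  match s with
  | 0 => 0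
  | 1 => 1
  | S (S x) => step_task (unpair1 (unpair1 x)) (unpair2 (unpair1 x)) (unpair2 x)
  end.

Lemma step_task_spec k w ts :
  (step_task k w (list_code ts) = 0 /\ ~ codes_formulas k w) \/
  exists new, step_task k w (list_code ts) = S (list_code (new ++ ts)) /\
    (codes_formulas k w <-> Forall task_ok new) /\ tasks_weight new < S w.
Proof.
  unfold step_task. destruct w as [|y].
  { destruct k as [|k].
    - right. exists []. split; [reflexivity|]. split; [|cbn; lia].
      rewrite codes_formulas_0. split; constructor.
    - left. rewrite codes_formulas_0. split; [reflexivity|lia]. }
  destruct k as [|k].
  { left. rewrite codes_formulas_S. split; [reflexivity|]. intros (? & ? & _); lia. }
  pose proof (unpair_le y) as Hy. pose proof (unpair_le (unpair1 y)) as Hh.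
  setoid_rewrite codes_formulas_S. setoid_rewrite codes_formula_unpair.
  destruct (unpair1 (unpair1 y)) as [|c] eqn:Hc; [|destruct (Nat.ltb_spec c (nconn L))].
  - right. exists [cpair k (unpair2 y)]. split; [reflexivity|].
    cbn [tasks_weight]. unfold task_weight, task_ok.
    rewrite !Forall_cons_iff, !unpair1_cpair, !unpair2_cpair.
    split; [|lia]. split.
    + intros (k' & Hk & _ & Hrest). injection Hk as ->. auto.
    + intros [Hrest _]. eauto.
  - right. exists [cpair (arity L c) (unpair2 (unpair1 y)); cpair k (unpair2 y)].
    rewrite arity_below_spec by assumption. split; [reflexivity|].
    cbn [tasks_weight]. unfold task_weight, task_ok.
    rewrite !Forall_cons_iff, !unpair1_cpair, !unpair2_cpair.
    split; [|lia]. split.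
    + intros (k' & Hk & [_ Hargs] & Hrest). injection Hk as ->. auto.
    + intros (Hargs & Hrest & _). eauto.
  - left. split; [reflexivity|]. intros (k' & _ & [Hc' _] & _). lia.
Qed.

Lemma step_cons t ts :
  (step (S (list_code (t :: ts))) = 0 /\ ~ task_ok t) \/
  exists new, step (S (list_code (t :: ts))) = S (list_code (new ++ ts)) /\
    (task_ok t <-> Forall task_ok new) /\ tasks_weight new < task_weight t.
Proof.
  cbn [list_code step]. rewrite unpair1_cpair, unpair2_cpair. apply step_task_spec.
Qed.

Lemma iter_step_reject n : Nat.iter n step 0 = 0.
Proof. induction n as [|n IH]; [|rewrite Nat.iter_succ, IH]; reflexivity. Qed.

Lemma iter_step_accept n : Nat.iter n step 1 = 1.
Proof. induction n as [|n IH]; [|rewrite Nat.iter_succ, IH]; reflexivity. Qed.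

Lemma iter_step_correct fuel ts :
  tasks_weight ts <= fuel -> (Nat.iter fuel step (S (list_code ts)) = 1 <-> Forall task_ok ts).
Proof.
  revert ts. induction fuel as [|fuel IH]; intros [|t ts] Hw.
  - easy.
  - cbn [tasks_weight] in Hw. unfold task_weight in Hw. lia.
  - cbn [list_code]. rewrite iter_step_accept. easy.
  - rewrite Nat.iter_succ_r.
    destruct (step_cons t ts) as [[-> Hbad]|(new & -> & Hnew & Hlt)].
    + rewrite iter_step_reject. split; [discriminate|]. now intros [? ?]%Forall_cons_iff.
    + rewrite IH, Forall_app, Forall_cons_iff; [tauto|].
      rewrite tasks_weight_app. cbn [tasks_weight] in Hw. lia.
Qed.

(* Start from the single task "[list_code [v]] codes one formula", with its
   weight as fuel. *)
Definition is_codeb (v : nat) : bool :=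
  Nat.iter (S (list_code [v])) step (S (list_code [cpair 1 (list_code [v])])) =? 1.

Lemma is_codeb_spec v : is_codeb v = true <-> codes_formula v.
Proof.
  unfold is_codeb. rewrite Nat.eqb_eq, iter_step_correct.
  - unfold task_ok. rewrite Forall_cons_iff, unpair1_cpair, unpair2_cpair.
    cbn [list_code]. rewrite codes_formulas_S, unpair1_cpair, unpair2_cpair.
    split; [intros [(k' & _ & Hv & _) _]; exact Hv|].
    intros Hv. split; [|constructor]. exists 0. rewrite codes_formulas_0. auto.
  - cbn [tasks_weight]. unfold task_weight. rewrite unpair2_cpair. lia.
Qed.

Fixpoint e_arity_below (n : nat) (a : pexp) : pexp :=
  match n with
  | 0 => EZero
  | S k => e_ifz (e_eqb a (e_const k)) (e_arity_below k a) (e_const (arity L k))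
  end.

Definition e_step_task (k w rest : pexp) : pexp :=
  let y := e_pred w in
  let h := e_unpair1 y in
  let rest' := ESucc (e_cpair (e_cpair (e_pred k) (e_unpair2 y)) rest) in
  e_ifz w (e_ifz k (ESucc rest) EZero)
    (e_ifz k EZero
       (e_ifz (e_unpair1 h) (ESucc rest')
          (* here [e_unpair1 h] is [S c], and [S c <=? nconn L] is [c <? nconn L] *)
          (e_ifz (e_leb (e_unpair1 h) (e_const (nconn L))) EZero
             (ESucc (ESucc (e_cpair
                (e_cpair (e_arity_below (nconn L) (e_pred (e_unpair1 h))) (e_unpair2 h))
                rest')))))).

Definition e_step (s : pexp) : pexp :=
  let x := e_pred (e_pred s) in
  e_ifz s EZero
    (e_ifz (e_pred s) (e_const 1)
       (e_step_task (e_unpair1 (e_unpair1 x)) (e_unpair2 (e_unpair1 x)) (e_unpair2 x))).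

Definition e_list1 (v : pexp) : pexp := ESucc (e_cpair v EZero).

Definition e_is_code (v : pexp) : pexp :=
  e_eqb (ERec (EVar 0) (e_step (EVar 1))
           (ESucc (e_list1 v)) (ESucc (e_list1 (e_cpair (e_const 1) (e_list1 v)))) EZero)
    (e_const 1).

Lemma scoped_arity_below n a m : scoped a m -> scoped (e_arity_below n a) m.
Proof. induction n; prove_scoped. Qed.
Hint Resolve scoped_arity_below : scoped.

Lemma scoped_step_task k w rest m :
  scoped k m -> scoped w m -> scoped rest m -> scoped (e_step_task k w rest) m.
Proof. intros. unfold e_step_task. cbv zeta. auto 30 with scoped. Qed.

Lemma scoped_step s m : scoped s m -> scoped (e_step s) m.
Proof. intros. unfold e_step. cbv zeta. auto 30 using scoped_step_task with scoped. Qed.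

Lemma scoped_is_code v m : scoped v m -> scoped (e_is_code v) m.
Proof.
  intros. unfold e_is_code, e_list1.
  apply scoped_eqb; [apply scoped_rec|]; auto 30 using scoped_step with scoped.
Qed.

Lemma eval_arity_below n a xs : eval (e_arity_below n a) xs = arity_below n (eval a xs).
Proof.
  induction n as [|n IH]; [reflexivity|]. cbn [e_arity_below arity_below].
  autorewrite with peval. rewrite IH. now destruct (eval a xs =? n).
Qed.
Hint Rewrite eval_arity_below : peval.

Lemma eval_step_task k w rest xs :
  eval (e_step_task k w rest) xs = step_task (eval k xs) (eval w xs) (eval rest xs).
Proof.
  unfold e_step_task, step_task. autorewrite with peval.
  destruct (eval w xs) as [|y], (eval k xs) as [|k']; cbn [Nat.pred]; try reflexivity.
  destruct (unpair1 (unpair1 y)) as [|c]; cbn [Nat.pred]; [reflexivity|].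
  unfold Nat.ltb. now destruct (S c <=? nconn L).
Qed.
Hint Rewrite eval_step_task : peval.

Lemma eval_step s xs : eval (e_step s) xs = step (eval s xs).
Proof.
  unfold e_step, step. autorewrite with peval.
  now destruct (eval s xs) as [|[|x]].
Qed.

Lemma eval_is_code v xs : eval (e_is_code v) xs = Nat.b2n (is_codeb (eval v xs)).
Proof.
  unfold e_is_code, is_codeb, e_list1. rewrite eval_eqb, (eval_iter _ _ _ step).
  - now autorewrite with peval.
  - intros. now rewrite eval_step.
Qed.
End Recognition.

(** * The approximating matrices *)

Section Approximation.
Variable L : lang.
Variable Lg : term -> Prop.

Definition good (i v : nat) : bool := (v <=? i) && is_codeb L v.

Lemma good_spec i v : good i v = true <-> v <= i /\ codes_formula L v.
Proof. unfold good. now rewrite andb_true_iff, Nat.leb_le, is_codeb_spec. Qed.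

Lemma good_args i c vs :
  good i (cpair (S c) (list_code vs)) = true -> Forall (fun v => good i v = true) vs.
Proof.
  rewrite good_spec, codes_formula_unpair, unpair1_cpair, unpair2_cpair.
  intros (Hle & _ & l & Hwf & _ & Hl). rewrite Forall_forall. intros v Hv.
  apply good_spec. split.
  - pose proof (list_code_gt v vs Hv). pose proof (cpair_ge (S c) (list_code vs)). lia.
  - apply list_code_inj in Hl. rewrite <- Hl in Hv. apply in_map_iff in Hv as (t & <- & Ht).
    exists t. split; [|reflexivity]. now apply (proj1 (Forall_forall _ _) Hwf).
Qed.

(* Decoding a non-code still yields a formula, as closure under substitution
   requires of the substitution [fun n => decode (val n)] below. *)
Definition decode (v : nat) : term :=
  epsilon (inhabits (Var 0)) (fun t => wf L t /\ (codes_formula L v -> code t = v)).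

Lemma decode_spec v : wf L (decode v) /\ (codes_formula L v -> code (decode v) = v).
Proof.
  apply (epsilon_spec _ (fun t => wf L t /\ (codes_formula L v -> code t = v))).
  destruct (classic (codes_formula L v)) as [[t [Ht Hc]]|Hv].
  - exists t. auto.
  - exists (Var 0). split; [exact I|tauto].
Qed.

Lemma decode_code t : wf L t -> decode (code t) = t.
Proof. intros Ht. apply code_inj, decode_spec. now exists t. Qed.

Definition approx_op (i c : nat) (vs : list nat) : nat :=
  let w := cpair (S c) (list_code vs) in if good i w then w else S i.

Definition approx_desig (i v : nat) : bool :=
  if good i v then (if excluded_middle_informative (Lg (decode v)) then true else false)
  else true.

Definition approx (i : nat) : fmatrix := FMatrix (S (S i)) (approx_desig i) (approx_op i).

Lemma good_above i : good i (S i) = false.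
Proof. apply not_true_iff_false. rewrite good_spec. lia. Qed.

Lemma approx_op_good i c vs :
  good i (approx_op i c vs) = true ->
  approx_op i c vs = cpair (S c) (list_code vs) /\ good i (cpair (S c) (list_code vs)) = true.
Proof.
  unfold approx_op. destruct (good i (cpair (S c) (list_code vs))) eqn:Hw; [easy|].
  now rewrite good_above.
Qed.

Lemma approx_fmatrix i : is_fmatrix L (approx i).
Proof.
  split; [cbn; lia|]. intros c vs _ _ _. cbn [op nv approx]. unfold approx_op.
  destruct (good i _) eqn:Hw; [apply good_spec in Hw|]; lia.
Qed.

Lemma evalM_approx_good i val s :
  wf L s -> good i (evalM (approx i) val s) = true ->
  evalM (approx i) val s = code (subst (fun n => decode (val n)) s).
Proof.
  revert s. induction s as [n|c args IH] using term_nested_ind; intros Hwf Hg.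
  - symmetry. apply decode_spec. apply good_spec in Hg. apply Hg.
  - apply wf_App in Hwf as (_ & _ & Hargs). cbn [evalM approx op] in *.
    apply approx_op_good in Hg as [-> Hg]. cbn [subst]. rewrite code_App, map_map.
    f_equal. f_equal. apply map_ext_in. intros a Ha.
    apply good_args in Hg. rewrite Forall_forall in IH, Hargs, Hg.
    apply IH; [exact Ha|now apply Hargs|apply Hg, in_map, Ha].
Qed.

Hypothesis Lg_logic : is_logic L Lg.

Lemma logic_taut_approx i t : wf L t -> Lg t -> Taut L (approx i) t.
Proof.
  intros Hwf Ht. split; [exact Hwf|]. intros val _. cbn [desig approx]. unfold approx_desig.
  destruct (good i (evalM (approx i) val t)) eqn:Hg; [|reflexivity].
  destruct excluded_middle_informative as [|Hnot]; [reflexivity|]. exfalso. apply Hnot.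
  assert (Hsubst : Lg (subst (fun n => decode (val n)) t)).
  { apply (proj2 Lg_logic); [|exact Ht]. intros n. apply decode_spec. }
  rewrite (evalM_approx_good i val t Hwf Hg), decode_code; [exact Hsubst|].
  now apply (proj1 Lg_logic).
Qed.

Lemma good_mono j i v : j <= i -> good j v = true -> good i v = true.
Proof. rewrite !good_spec. intros ? [? ?]. split; [lia|assumption]. Qed.

Definition widen (j i : nat) (val : nat -> nat) (n : nat) : nat :=
  if val n =? S j then S i else val n.

Lemma evalM_approx_widen j i val s :
  j <= i -> wf L s -> good j (evalM (approx j) val s) = true ->
  evalM (approx i) (widen j i val) s = evalM (approx j) val s.
Proof.
  intros Hji. revert s. induction s as [n|c args IH] using term_nested_ind; intros Hwf Hg.
  - cbn [evalM] in *. unfold widen. destruct (Nat.eqb_spec (val n) (S j)) as [Hn|]; [|reflexivity].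
    rewrite Hn, good_above in Hg. discriminate.
  - apply wf_App in Hwf as (_ & _ & Hargs). cbn [evalM approx op] in *.
    apply approx_op_good in Hg as [Hop Hg]. rewrite Hop.
    replace (map (evalM _ (widen j i val)) args) with (map (evalM (approx j) val) args).
    + unfold approx_op. now rewrite (good_mono j i _ Hji Hg).
    + apply map_ext_in. intros a Ha. apply good_args in Hg.
      rewrite Forall_forall in IH, Hargs, Hg. symmetry.
      apply IH; [exact Ha|now apply Hargs|apply Hg, in_map, Ha].
Qed.

Lemma taut_approx_antitone i j : j <= i -> forall t, Taut L (approx i) t -> Taut L (approx j) t.
Proof.
  intros Hji t [Hwf Ht]. split; [exact Hwf|]. intros val Hval. cbn [desig approx].
  unfold approx_desig at 1.
  destruct (good j (evalM (approx j) val t)) eqn:Hg; [|reflexivity].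
  rewrite <- (evalM_approx_widen j i val t Hji Hwf Hg) in Hg |- *.
  specialize (Ht (widen j i val)). cbn [desig approx] in Ht. unfold approx_desig in Ht.
  rewrite (good_mono j i _ Hji Hg) in Ht. apply Ht.
  intros n. specialize (Hval n). cbn in Hval |- *. unfold widen.
  destruct (Nat.eqb_spec (val n) (S j)); lia.
Qed.

Lemma evalM_approx_code j s :
  wf L s -> code s <= j -> evalM (approx j) (fun n => Nat.min (cpair 0 n) (S j)) s = code s.
Proof.
  revert s. induction s as [n|c args IH] using term_nested_ind; intros Hwf Hle.
  - cbn [evalM code] in *. lia.
  - pose proof Hwf as Hwf'. apply wf_App in Hwf' as (_ & _ & Hargs).
    cbn [evalM approx op]. rewrite map_ext_in with (g := code).
    + unfold approx_op. rewrite <- code_App.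
      replace (good j (code (App c args))) with true; [reflexivity|].
      symmetry. apply good_spec. split; [exact Hle|now exists (App c args)].
    + intros a Ha. rewrite Forall_forall in IH, Hargs. apply IH; [exact Ha|now apply Hargs|].
      pose proof (code_arg_lt a c args Ha). lia.
Qed.

Lemma taut_approx_logic t : wf L t -> (forall j, Taut L (approx j) t) -> Lg t.
Proof.
  intros Hwf Ht. destruct (Ht (code t)) as [_ Hdesig].
  set (val := fun n => Nat.min (cpair 0 n) (S (code t))).
  assert (Hval : forall n, val n < nv (approx (code t)))
    by (intros n; unfold val; cbn [nv approx]; lia).
  specialize (Hdesig val Hval). cbn [desig approx] in Hdesig. unfold approx_desig in Hdesig.
  rewrite evalM_approx_code, decode_code in Hdesig by auto.
  replace (good (code t) (code t)) with true in Hdesig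
    by (symmetry; apply good_spec; split; [reflexivity|now exists t]).
  now destruct excluded_middle_informative.
Qed.

Lemma approx_seq_approx : seq_approx L Lg approx.
Proof.
  split; [exact approx_fmatrix|]. split; [exact taut_approx_antitone|].
  intros t Hwf. split.
  - intros Ht j. now apply logic_taut_approx.
  - now apply taut_approx_logic.
Qed.
End Approximation.

(** * Effectiveness *)

Section Effectiveness.
Variable L : lang.

Definition e_good (i v : pexp) : pexp := e_ifz (e_leb v i) EZero (e_is_code L v).

Lemma scoped_good i v m : scoped i m -> scoped v m -> scoped (e_good i v) m.
Proof. intros. unfold e_good. auto using scoped_is_code with scoped. Qed.

Lemma eval_good i v xs : eval (e_good i v) xs = Nat.b2n (good L (eval i xs) (eval v xs)).
Proof.
  unfold e_good, good. rewrite eval_ifz, eval_leb, eval_is_code.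
  now destruct (eval v xs <=? eval i xs).
Qed.

Fixpoint e_list_code (j a : nat) : pexp :=
  match a with
  | 0 => EZero
  | S a' => ESucc (e_cpair (EVar (2 + j)) (e_list_code (S j) a'))
  end.

Lemma scoped_list_code a : forall j m, 2 + j + a <= m -> scoped (e_list_code j a) m.
Proof.
  induction a as [|a IH]; intros j m Hm; cbn [e_list_code]; [exact I|].
  apply scoped_cpair; [cbn; lia|]. apply IH. lia.
Qed.

Lemma eval_list_code i c pre vs :
  eval (e_list_code (length pre) (length vs)) (i :: c :: pre ++ vs) = list_code vs.
Proof.
  revert pre. induction vs as [|v vs IH]; intros pre; [reflexivity|].
  cbn [length e_list_code]. rewrite eval_succ, eval_cpair, eval_var.
  cbn [nth Nat.add list_code]. rewrite nth_middle. f_equal. f_equal.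
  specialize (IH (pre ++ [v])). rewrite length_app, <- app_assoc in IH. cbn in IH.
  now rewrite Nat.add_1_r in IH.
Qed.

Definition e_approx_op (c : nat) : pexp :=
  let w := e_cpair (e_const (S c)) (e_list_code 0 (arity L c)) in
  e_ifz (e_good (EVar 0) w) (ESucc (EVar 0)) w.

Lemma scoped_approx_op c (vs : list nat) :
  length vs = arity L c -> scoped (e_approx_op c) (2 + length vs).
Proof.
  intros Hl. pose proof (scoped_list_code (arity L c) 0 (2 + length vs) ltac:(lia)).
  unfold e_approx_op. auto using scoped_good with scoped.
Qed.

Lemma eval_approx_op i c vs :
  length vs = arity L c -> eval (e_approx_op c) (i :: c :: vs) = approx_op L i c vs.
Proof.
  intros Hl. unfold e_approx_op, approx_op.
  pose proof (eval_list_code i c [] vs) as Hcode. cbn [length app] in Hcode.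
  rewrite eval_ifz, eval_good, eval_cpair, eval_const, <- Hl, Hcode. cbn [eval nth].
  now destruct (good L i (cpair (S c) (list_code vs))).
Qed.

(* The number of arguments depends on the connective, so the operation tables
   dispatch on it with [r_if], never running a branch of the wrong arity. *)
Fixpoint r_approx_op (n : nat) : rf :=
  match n with
  | 0 => rZero
  | S c => r_if (compile (e_eqb (EVar 1) (e_const c))) (compile (e_approx_op c)) (r_approx_op c)
  end.

Lemma r_approx_op_correct n i c vs :
  c < n -> length vs = arity L c -> reval (r_approx_op n) (i :: c :: vs) (approx_op L i c vs).
Proof.
  induction n as [|n IH]; intros Hc Hl; [lia|]. cbn [r_approx_op].
  assert (Htest : reval (compile (e_eqb (EVar 1) (e_const n))) (i :: c :: vs) (Nat.b2n (c =? n))).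
  { apply compile_computes; [auto with scoped|]. now rewrite eval_eqb, eval_const. }
  destruct (Nat.eqb_spec c n) as [->|Hne].
  - eapply r_if_true; [exact Htest|]. apply compile_computes.
    + now apply scoped_approx_op.
    + now apply eval_approx_op.
  - eapply r_if_false; [exact Htest|]. apply IH; [lia|exact Hl].
Qed.

Definition r_approx_desig (r : rf) : rf :=
  r_if (compile (e_good (EVar 0) (EVar 1))) (r_is_zero (rComp r [rProj 1])) (compile (e_const 1)).

Lemma r_approx_desig_correct (Lg : term -> Prop) (r : rf) i v :
  (forall t, wf L t -> (exists y, reval r [code t] y) /\ (reval r [code t] 0 <-> Lg t)) ->
  reval (r_approx_desig r) [i; v] (if approx_desig L Lg i v then 1 else 0).
Proof.
  intros Hr.
  assert (Htest : reval (compile (e_good (EVar 0) (EVar 1))) [i; v] (Nat.b2n (good L i v))).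
  { apply compile_computes; [apply scoped_good; cbn; lia|]. now rewrite eval_good. }
  unfold approx_desig. destruct (good L i v) eqn:Hg.
  - eapply r_if_true; [exact Htest|].
    assert (Hcode : code (decode L v) = v) by (apply decode_spec, good_spec with i, Hg).
    destruct (Hr (decode L v) (proj1 (decode_spec L v))) as [[y Hy] Hiff].
    rewrite Hcode in Hy, Hiff.
    assert (Hcall : forall y, reval r [v] y -> reval (rComp r [rProj 1]) [i; v] y).
    { intros y' Hy'. apply ev_comp with (ys := [v]); [|exact Hy'].
      constructor; [apply (ev_proj 1 [i; v]); cbn; lia|constructor]. }
    destruct excluded_middle_informative as [HL|HL].
    + apply (r_is_zero_correct _ _ 0). now apply Hcall, Hiff.
    + destruct y as [|y]; [exfalso; now apply HL, Hiff|].
      apply (r_is_zero_correct _ _ (S y)). now apply Hcall.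
  - eapply r_if_false; [exact Htest|]. now apply compile_computes.
Qed.
End Effectiveness.

Theorem corollary2 (L : lang) (Lg : term -> Prop) :
  is_logic L Lg -> decidable_logic L Lg ->
  exists Ms : nat -> fmatrix, seq_approx L Lg Ms /\ effective_seq L Ms.
Proof.
  intros HL [r Hr]. exists (approx L Lg). split; [now apply approx_seq_approx|].
  exists (compile (ESucc (ESucc (EVar 0)))), (r_approx_desig L r), (r_approx_op L (nconn L)).
  intros i. split; [|split].
  - apply compile_computes; [cbn; lia|reflexivity].
  - intros v _. now apply r_approx_desig_correct.
  - intros c vs Hc Hl _. now apply r_approx_op_correct.
Qed.
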